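(* Let $d\ge2$ and $\epsilon>0$. Suppose that for each $t\in[0,\epsilon]$ there are unit vectors $|x(t)\rangle, |y(t)\rangle\in\mathbb{C}^d$, depending continuously on $t$, such that $$\frac{1}{d^2}\sum_{\mathbf{a}\in\{0,\dots,d-1\}^2} (W_\mathbf{a}\otimes W_\mathbf{a})\big(|x(t)\rangle\langle x(t)|\otimes|y(t)\rangle\langle y(t)|\big)(W_\mathbf{a}\otimes W_\mathbf{a})^\dagger = \frac{t}{d}U_{SW} + \frac{1-t}{d^2}I_{d^2}$$ for all $t\in[0,\epsilon]$, and $|x(0)\rangle = |0\rangle$, $|y(0)\rangle = F|0\rangle$. Then this family (i.e. the pair of WH covariant frames $\{W_\mathbf{a}|x(t)\rangle\}$, $\{W_\mathbf{a}|y(t)\rangle\}$, described by the projectors $|x(t)\rangle\langle x(t)|$ and $|y(t)\rangle\langle y(t)|$) cannot be (right-)differentiable at $t=0$.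
   Context: $\{|i\rangle\}_{i=0}^{d-1}$ is the standard basis of $\mathbb{C}^d$, indices mod $d$. Let $\tau=\exp(2\pi i\frac{d+1}{2d})$, $\omega=\tau^2=\exp(2\pi i/d)$, $S=\sum_{i=0}^{d-1}|i+1\rangle\langle i|$, $C=\sum_{i=0}^{d-1}\omega^i|i\rangle\langle i|$, and for $\mathbf{a}=(a_1,a_2)\in\mathbb{Z}^2$ let $W_\mathbf{a}=\tau^{a_1a_2}S^{a_1}C^{a_2}$ (Weyl–Heisenberg operators). $F=\frac{1}{\sqrt d}\sum_{k,l=0}^{d-1}\omega^{kl}|k\rangle\langle l|$ is the discrete Fourier transform. $U_{SW}$ is the swap operator on $\mathbb{C}^d\otimes\mathbb{C}^d$. *)

From HB Require Import structures.
From mathcomp Require Import all_boot all_order all_algebra.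
From mathcomp Require Import complex mxtens.
From mathcomp Require Import all_classical all_reals all_analysis.
Set Implicit Arguments. Unset Strict Implicit. Unset Printing Implicit Defensive.
Import Order.TTheory GRing.Theory Num.Theory.
Import numFieldNormedType.Exports.
Local Open Scope ring_scope.
Local Open Scope complex_scope.
Local Open Scope classical_set_scope.

Section WH.
Variables (R : realType) (d : nat).

Definition omega : R[i] :=
  (cos (2 * pi / d%:R)) +i* (sin (2 * pi / d%:R)).
(* tau = exp(2 pi i (d+1)/(2d)) = exp(i pi (d+1)/d) *)
Definition tau : R[i] :=
  (cos (pi * (d%:R + 1) / d%:R)) +i* (sin (pi * (d%:R + 1) / d%:R)).

Definition Smx : 'M[R[i]]_d := \matrix_(k, l) (((k : nat) == (l.+1 %% d)%N)%:R).
Definition Cmx : 'M[R[i]]_d := \matrix_(k, l) (((k : nat) == l)%:R * omega ^+ k).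
Definition Wmx (a1 a2 : nat) : 'M[R[i]]_d :=
  tau ^+ (a1 * a2) *: (Smx ^+ a1 *m Cmx ^+ a2).

Definition adj {m n : nat} (A : 'M[R[i]]_(m, n)) : 'M[R[i]]_(n, m) :=
  (map_mx conjc A)^T.

Definition Fmx : 'M[R[i]]_d :=
  \matrix_(k, l) (((Num.sqrt (d%:R : R))%:C)^-1 * omega ^+ (k * l)).

Definition ket0 : 'cV[R[i]]_d := \col_k (((k : nat) == 0%N)%:R).

Definition ketbra (x : 'cV[R[i]]_d) : 'M[R[i]]_d := x *m adj x.

Definition unit_vec (x : 'cV[R[i]]_d) : Prop := adj x *m x = 1%:M.

Definition Uswap : 'M[R[i]]_(d * d) :=
  \matrix_(r, c) ((((mxtens_unindex r).1 == (mxtens_unindex c).2)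
                   && ((mxtens_unindex r).2 == (mxtens_unindex c).1))%:R).

Definition twirl (P Q : 'M[R[i]]_d) : 'M[R[i]]_(d * d) :=
  ((d%:R ^+ 2)^-1 : R[i]) *:
  \sum_(a1 < d) \sum_(a2 < d)
     ((Wmx a1 a2 *t Wmx a1 a2) *m (P *t Q) *m adj (Wmx a1 a2 *t Wmx a1 a2)).

End WH.

Definition vec_continuous_on (R : realType) (d : nat) (eps : R)
    (x : R -> 'cV[R[i]]_d) : Prop :=
  forall k : 'I_d,
    {within `[0, eps], continuous (fun t : R => complex.Re (x t k ord0))} /\
    {within `[0, eps], continuous (fun t : R => complex.Im (x t k ord0))}.

Definition mx_right_differentiable_at0 (R : realType) (m n : nat)
    (P : R -> 'M[R[i]]_(m, n)) : Prop :=
  forall (k : 'I_m) (l : 'I_n),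
    cvg ((fun h : R => (complex.Re (P h k l) - complex.Re (P 0 k l)) / h) @ 0^'+) /\
    cvg ((fun h : R => (complex.Im (P h k l) - complex.Im (P 0 k l)) / h) @ 0^'+).

From HB Require Import structures.
From mathcomp Require Import all_boot all_order all_algebra.
From mathcomp Require Import complex mxtens.
From mathcomp Require Import all_classical all_reals all_analysis.
From mathcomp Require Import ring lra.
Import Order.TTheory GRing.Theory Num.Theory.
Import numFieldNormedType.Exports.
Set Implicit Arguments. Unset Strict Implicit. Unset Printing Implicit Defensive.
Local Open Scope ring_scope.
Local Open Scope complex_scope.
Local Open Scope classical_set_scope.

(* B = S C is an eigenvector of conjugation by every W_a, with a unimodular
   eigenvalue, so pairing the twirl with B^† ⊗ B factorizes:
   tr((B^† ⊗ B) twirl(P, Q)) = tr(B^† P) tr(B Q).  Pairing the right-hand side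
   instead gives t, because tr((A ⊗ A') U_SW) = tr(A A'), B is unitary and
   tr B = 0.  Hence f(t) g(t) = t for f(t) = <x(t)|B^†|x(t)> and
   g(t) = <y(t)|B|y(t)>, which both vanish at t = 0 since B has a zero diagonal
   and zero-sum columns.  Right-differentiability of the two projectors at 0
   would make f(h)/h and g(h)/h converge, although their product is 1/h. *)

Lemma sum_delta (R : pzSemiRingType) m (F : 'I_m -> R) (a : 'I_m) :
  \sum_j ((j == a)%:R * F j) = F a.
Proof.
rewrite (bigD1 a) //= eqxx mul1r big1 ?addr0 // => j /negPf ->.
by rewrite mul0r.
Qed.

Lemma mxtrace_tens (R : comPzRingType) m n (A : 'M[R]_m) (B : 'M[R]_n) :
  \tr (A *t B) = \tr A * \tr B.
Proof. by rewrite /mxtrace mulr_sum; apply: eq_bigr => k _; rewrite mxE. Qed.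

Lemma sum_mxtens_unindex (V : nmodType) m n (F : 'I_m -> 'I_n -> V) :
  \sum_i \sum_j F i j = \sum_(k < m * n) F (mxtens_unindex k).1 (mxtens_unindex k).2.
Proof.
rewrite pair_big; apply: reindex => //=.
by exists (@mxtens_index _ _) => k _; rewrite (mxtens_indexK, mxtens_unindexK).
Qed.

Section Cis.
Variable R : realType.

Lemma expr_cis (a : R) k :
  (cos a +i* sin a) ^+ k = cos (k%:R * a) +i* sin (k%:R * a).
Proof.
elim: k => [|k IH]; first by rewrite expr0 mul0r cos0 sin0.
rewrite exprS IH -addn1 natrD mulrDl mul1r cosD sinD.
by apply/eqP; rewrite eq_complex /=; apply/andP; split; apply/eqP; ring.
Qed.

Lemma mul_conjc_cis (a : R) : conjc (cos a +i* sin a) * (cos a +i* sin a) = 1.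
Proof.
apply/eqP; rewrite eq_complex /=; apply/andP; split; apply/eqP; last by ring.
by rewrite -(cos2Dsin2 a); ring.
Qed.

End Cis.

Section RootOfUnity.
Variables (R : realType) (d : nat).
Local Notation w := (omega R d).

Lemma omega_exp_d : (0 < d)%N -> w ^+ d = 1.
Proof.
move=> d_gt0; rewrite expr_cis mulrCA divff ?pnatr_eq0 -?lt0n // mulr1.
by rewrite mulr_natl cos2pi sin2pi.
Qed.

Hypothesis d_gt1 : (1 < d)%N.

Lemma omega_neq1 : w != 1.
Proof.
apply/eqP => /(congr1 (fun z => (complex.Re z, complex.Im z))) /= [w_re w_im].
case: d d_gt1 w_re w_im => [|[|[|m]]] // _ w_re w_im.
  by move: w_re; rewrite mulrC mulrA mulVf ?pnatr_eq0 // mul1r cospi; lra.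
have : 0 < sin (2 * pi / (m.+3)%:R : R).
  apply: sin_gt0_pi; rewrite divr_gt0 ?mulr_gt0 ?pi_gt0 ?ltr0n //=.
  by rewrite ltr_pdivrMr ?ltr0n // mulrC ltr_pM2l ?pi_gt0 // ltr_nat.
by rewrite w_im ltxx.
Qed.

Lemma sum_omegaX : \sum_(i < d) w ^+ i = 0.
Proof.
have := subrX1 w d; rewrite omega_exp_d ?(ltnW d_gt1) // subrr => /esym/eqP.
by rewrite mulf_eq0 subr_eq0 (negPf omega_neq1) => /eqP.
Qed.

End RootOfUnity.

Section Adjoint.
Variable R : realType.
Local Notation C := R[i].

Lemma conjcM (a b : C) : conjc (a * b) = conjc a * conjc b. Proof. exact: rmorphM. Qed.

Lemma conjcX (a : C) k : conjc (a ^+ k) = conjc a ^+ k. Proof. exact: rmorphXn. Qed.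

Lemma adjE m n (A : 'M[C]_(m, n)) i j : adj A i j = conjc (A j i).
Proof. by rewrite !mxE. Qed.

Lemma adj_mul m n p (A : 'M[C]_(m, n)) (B : 'M[C]_(n, p)) :
  adj (A *m B) = adj B *m adj A.
Proof. by rewrite /adj map_mxM trmx_mul. Qed.

Lemma adjK m n (A : 'M[C]_(m, n)) : adj (adj A) = A.
Proof. by apply/matrixP => i j; rewrite !mxE conjcK. Qed.

Lemma adjZ m n c (A : 'M[C]_(m, n)) : adj (c *: A) = conjc c *: adj A.
Proof. by apply/matrixP => i j; rewrite !mxE rmorphM. Qed.

Lemma adj_tens m n p q (A : 'M[C]_(m, n)) (B : 'M[C]_(p, q)) :
  adj (A *t B) = adj A *t adj B.
Proof. by rewrite /adj map_mxT trmx_tens. Qed.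

Lemma adj1 n : adj (1%:M : 'M[C]_n) = 1%:M.
Proof. by apply/matrixP => i j; rewrite !mxE eq_sym rmorph_nat. Qed.

Lemma adj_conj_scaleX n (U A : 'M[C]_n) c k :
  adj U *m A *m U = c *: A -> adj (U ^+ k) *m A *m U ^+ k = c ^+ k *: A.
Proof.
move=> UA; elim: k => [|k IH]; first by rewrite !expr0 adj1 mul1mx mulmx1 scale1r.
rewrite exprSr -mulmxE adj_mul.
have -> : adj U *m adj (U ^+ k) *m A *m (U ^+ k *m U) =
          adj U *m (adj (U ^+ k) *m A *m U ^+ k) *m U by rewrite !mulmxA.
by rewrite IH -scalemxAr -scalemxAl UA scalerA exprSr.
Qed.

Lemma mxtrace_mul_ketbra n (A : 'M[C]_n) (x : 'cV[C]_n) :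
  \tr (A *m ketbra x) = \sum_i \sum_j conjc (x i ord0) * A i j * x j ord0.
Proof.
apply: eq_bigr => i _; rewrite mxE; apply: eq_bigr => j _.
by rewrite !mxE big_ord1 !mxE; ring.
Qed.

End Adjoint.

Section Traces.
Variable R : realType.
Local Notation C := R[i].

Lemma mxtrace_mul_conj m (A V P : 'M[C]_m) :
  \tr (A *m (V *m P *m adj V)) = \tr (adj V *m A *m V *m P).
Proof.
rewrite mxtrace_mulC -(mulmxA (adj V *m A) V P) (mxtrace_mulC (adj V *m A)).
by rewrite !mulmxA.
Qed.

Lemma mxtrace_tens_conj m (V A B P Q : 'M[C]_m) :
  \tr ((A *t B) *m ((V *t V) *m (P *t Q) *m adj (V *t V))) =
  \tr (adj V *m A *m V *m P) * \tr (adj V *m B *m V *m Q).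
Proof. by rewrite adj_tens !tensmx_mul mxtrace_tens !mxtrace_mul_conj. Qed.

Lemma mxtrace_tens_swap d (A B : 'M[C]_d) : \tr ((A *t B) *m Uswap R d) = \tr (A *m B).
Proof.
rewrite /mxtrace; under eq_bigr => k _ do rewrite mxE.
under [RHS]eq_bigr => i _ do rewrite mxE.
rewrite [RHS]sum_mxtens_unindex; apply: eq_bigr => k _.
set k' := mxtens_index ((mxtens_unindex k).2, (mxtens_unindex k).1).
rewrite (bigD1 k') //= big1 ?addr0; first by rewrite !mxE !mxtens_indexK /= !eqxx mulr1.
move=> l l_neq; rewrite !mxE.
case: eqP => [l1|]; last by rewrite mulr0.
case: eqP => [l2|]; last by rewrite mulr0.
suff l_eq : l = k' by rewrite l_eq eqxx in l_neq.
by rewrite -[l]mxtens_unindexK /k' -l1 -l2; case: (mxtens_unindex l).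
Qed.

Lemma mxtrace_twirl_phase d (B P Q : 'M[C]_d) (mu : nat -> nat -> C) :
  (0 < d)%N ->
  (forall a1 a2, adj (Wmx R d a1 a2) *m B *m Wmx R d a1 a2 = mu a1 a2 *: B) ->
  (forall a1 a2, conjc (mu a1 a2) * mu a1 a2 = 1) ->
  \tr ((adj B *t B) *m twirl P Q) = \tr (adj B *m P) * \tr (B *m Q).
Proof.
move=> d_gt0 WB mu_unit.
have WadjB a1 a2 :
    adj (Wmx R d a1 a2) *m adj B *m Wmx R d a1 a2 = conjc (mu a1 a2) *: adj B.
  by rewrite -adjZ -WB !adj_mul adjK mulmxA.
rewrite /twirl -scalemxAr mxtraceZ mulmx_sumr linear_sum /=.
under eq_bigr => a1 _ do rewrite mulmx_sumr linear_sum /=.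
under eq_bigr => a1 _ do under eq_bigr => a2 _ do
  rewrite mxtrace_tens_conj WadjB WB -!scalemxAl !mxtraceZ mulrACA mu_unit mul1r.
rewrite !sumr_const !card_ord -mulrnA -[_ *+ (d * d)]mulr_natl natrM -expr2 mulKf //.
by rewrite expf_neq0 // pnatr_eq0 -lt0n.
Qed.

End Traces.

Section ShiftClock.
Variables (R : realType) (n : nat).
Local Notation d := n.+2.
Local Notation w := (omega R d).
Local Notation S := (Smx R d).
Local Notation C := (Cmx R d).
Local Notation W := (Wmx R d).

Lemma mul_conjc_omega : conjc w * w = 1. Proof. exact: mul_conjc_cis. Qed.

Lemma mul_conjc_tau : conjc (tau R d) * tau R d = 1. Proof. exact: mul_conjc_cis. Qed.

Lemma SmxE k l : S k l = (k == ordS l)%:R. Proof. by rewrite mxE. Qed.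

Lemma CmxE k l : C k l = (k == l)%:R * w ^+ k. Proof. by rewrite mxE. Qed.

Lemma ordS_neq (i : 'I_d) : (i == ordS i) = false.
Proof.
apply/negbTE/eqP => /(congr1 val) /=.
have := ltn_ord i; rewrite leq_eqVlt => /orP[/eqP iS_eq | iS_lt].
  by rewrite iS_eq modnn => i0; move: iS_eq; rewrite i0.
by rewrite modn_small // => /n_Sn.
Qed.

Lemma SCmxE k l : (S *m C) k l = (k == ordS l)%:R * w ^+ l.
Proof.
rewrite mxE; under eq_bigr => m _ do rewrite SmxE CmxE mulrCA.
by rewrite sum_delta.
Qed.

Lemma SCmx_diag k : (S *m C) k k = 0.
Proof. by rewrite SCmxE ordS_neq mul0r. Qed.

Lemma mxtrace_SCmx : \tr (S *m C) = 0.
Proof. by apply: big1 => k _; exact: SCmx_diag. Qed.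

Lemma adj_Smx_mul : adj S *m S = 1%:M.
Proof.
apply/matrixP => i j; rewrite !mxE.
under eq_bigr => m _ do rewrite adjE !SmxE rmorph_nat.
by rewrite sum_delta (inj_eq (@ordS_inj _)).
Qed.

Lemma adj_Cmx_mul : adj C *m C = 1%:M.
Proof.
apply/matrixP => i j; rewrite !mxE.
under eq_bigr => m _ do rewrite adjE !CmxE rmorphM rmorph_nat -mulrA.
rewrite sum_delta; case: eqP => [->|_]; last by rewrite !mul0r mulr0.
by rewrite /= !mulr1n mul1r rmorphXn -exprMn mul_conjc_omega expr1n.
Qed.

Lemma Cmx_Smx : C *m S = w *: (S *m C).
Proof.
apply/matrixP => i j; rewrite !mxE.
under eq_bigr => m _ do rewrite CmxE SmxE eq_sym -mulrA.
rewrite sum_delta; under eq_bigr => m _ do rewrite CmxE SmxE mulrCA.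
rewrite sum_delta; case: (eqVneq i (ordS j)) => [->|_]; last by rewrite !mul0r !mulr0.
by rewrite /= !mulr1n mulr1 mul1r expr_mod ?omega_exp_d // exprS.
Qed.

Lemma Smx_conj_SCmx : adj S *m (S *m C) *m S = w *: (S *m C).
Proof. by rewrite mulmxA adj_Smx_mul mul1mx Cmx_Smx. Qed.

Lemma Cmx_conj_SCmx : adj C *m (S *m C) *m C = conjc w *: (S *m C).
Proof.
have CSC : adj C *m S *m C = conjc w *: S.
  have S_eq : S = w *: (adj C *m S *m C).
    by rewrite -!mulmxA scalemxAr -Cmx_Smx mulmxA adj_Cmx_mul mul1mx.
  by rewrite {2}S_eq scalerA mul_conjc_omega scale1r.
by rewrite !mulmxA CSC -scalemxAl.
Qed.

Lemma Wmx_conj_SCmx a1 a2 :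
  adj (W a1 a2) *m (S *m C) *m W a1 a2 = (w ^+ a1 * conjc w ^+ a2) *: (S *m C).
Proof.
rewrite /Wmx adjZ adj_mul -scalemxAr -!scalemxAl scalerA mulrC rmorphXn.
rewrite -exprMn mul_conjc_tau expr1n scale1r.
have -> : adj (C ^+ a2) *m adj (S ^+ a1) *m (S *m C) *m (S ^+ a1 *m C ^+ a2) =
          adj (C ^+ a2) *m (adj (S ^+ a1) *m (S *m C) *m S ^+ a1) *m C ^+ a2.
  by rewrite !mulmxA.
rewrite (adj_conj_scaleX a1 Smx_conj_SCmx) -scalemxAr -scalemxAl.
by rewrite (adj_conj_scaleX a2 Cmx_conj_SCmx) scalerA.
Qed.

Lemma mxtrace_twirl_SCmx P Q :
  \tr ((adj (S *m C) *t (S *m C)) *m twirl P Q) =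
  \tr (adj (S *m C) *m P) * \tr ((S *m C) *m Q).
Proof.
apply: mxtrace_twirl_phase => // a1 a2; first exact: Wmx_conj_SCmx.
rewrite conjcM !conjcX conjcK mulrACA -!exprMn [w * _]mulrC mul_conjc_omega.
by rewrite !expr1n mulr1.
Qed.

Lemma mxtrace_SCmx_swap_id (a b : R[i]) :
  \tr ((adj (S *m C) *t (S *m C)) *m (a *: Uswap R d + b *: 1%:M)) = a * d%:R.
Proof.
rewrite mulmxDr -!scalemxAr mxtraceD !mxtraceZ mxtrace_tens_swap mulmx1.
rewrite mxtrace_tens mxtrace_SCmx !mulr0 addr0 adj_mul mulmxA -(mulmxA (adj C)).
by rewrite adj_Smx_mul mulmx1 adj_Cmx_mul mxtrace1.
Qed.

Lemma ket0E k : ket0 R d k ord0 = ((k : nat) == 0)%:R. Proof. by rewrite mxE. Qed.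

Lemma mxtrace_adjSCmx_ket0 : \tr (adj (S *m C) *m ketbra (ket0 R d)) = 0.
Proof.
rewrite mxtrace_mul_ketbra big1 // => i _; rewrite big1 // => j _.
rewrite adjE !ket0E rmorph_nat.
case: eqP => [i0|_]; last by rewrite !mul0r.
case: eqP => [j0|_]; last by rewrite mulr0.
have -> : j = i by apply: val_inj; rewrite /= i0 j0.
by rewrite SCmx_diag rmorph0 mulr0 mul0r.
Qed.

Lemma Fmx_ket0E k : (Fmx R d *m ket0 R d) k ord0 = ((Num.sqrt (d%:R : R))%:C)^-1.
Proof.
rewrite mxE (bigD1 ord0) //= big1 ?addr0; first by rewrite !mxE muln0 expr0 !mulr1.
by move=> j j_neq0; rewrite !mxE (negPf (j_neq0 : (j : nat) != 0%N)) mulr0.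
Qed.

Lemma mxtrace_SCmx_Fket0 : \tr ((S *m C) *m ketbra (Fmx R d *m ket0 R d)) = 0.
Proof.
rewrite mxtrace_mul_ketbra exchange_big /=.
under eq_bigr => j _ do under eq_bigr => i _ do rewrite !Fmx_ket0E mulrAC SCmxE.
under eq_bigr => j _ do rewrite -mulr_sumr sum_delta.
by rewrite -mulr_sumr sum_omegaX // mulr0.
Qed.

End ShiftClock.

Section RightDerivative.
Variable R : realType.
Implicit Types (f g : R -> R[i]).

Lemma Re_mulc (a b : R[i]) :
  complex.Re (a * b) = complex.Re a * complex.Re b - complex.Im a * complex.Im b.
Proof. by case: a; case: b. Qed.

Lemma Im_mulc (a b : R[i]) :
  complex.Im (a * b) = complex.Re a * complex.Im b + complex.Im a * complex.Re b.
Proof. by case: a; case: b. Qed.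

Definition right_differentiable_at0 f : Prop :=
  cvg ((fun h : R => (complex.Re (f h) - complex.Re (f 0)) / h) @ 0^'+) /\
  cvg ((fun h : R => (complex.Im (f h) - complex.Im (f 0)) / h) @ 0^'+).

Lemma right_differentiable_at0_cst (c : R[i]) : right_differentiable_at0 (fun=> c).
Proof. by split; under eq_fun do rewrite subrr mul0r; exact: is_cvg_cst. Qed.

Lemma right_differentiable_at0D f g :
  right_differentiable_at0 f -> right_differentiable_at0 g ->
  right_differentiable_at0 (fun h => f h + g h).
Proof.
move=> [fRe fIm] [gRe gIm].
by split; under eq_fun do rewrite !raddfD /= addrACA mulrDl; exact: is_cvgD.
Qed.

Lemma right_differentiable_at0_sum (I : Type) (r : seq I) (F : I -> R -> R[i]) :
  (forall i, right_differentiable_at0 (F i)) ->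
  right_differentiable_at0 (fun h => \sum_(i <- r) F i h).
Proof.
move=> dF; elim: r => [|i r IH].
  under eq_fun do rewrite big_nil.
  exact: right_differentiable_at0_cst.
under eq_fun do rewrite big_cons.
exact: right_differentiable_at0D.
Qed.

Lemma right_differentiable_at0Ml (c : R[i]) f : right_differentiable_at0 f ->
  right_differentiable_at0 (fun h => c * f h).
Proof.
move=> [fRe fIm]; split.
  have E h : (complex.Re (c * f h) - complex.Re (c * f 0)) / h =
      complex.Re c * ((complex.Re (f h) - complex.Re (f 0)) / h)
      - complex.Im c * ((complex.Im (f h) - complex.Im (f 0)) / h).
    by rewrite !Re_mulc; ring.
  by under eq_fun do rewrite E; apply: is_cvgB; apply: is_cvgM => //; exact: is_cvg_cst.
have E h : (complex.Im (c * f h) - complex.Im (c * f 0)) / h =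
    complex.Re c * ((complex.Im (f h) - complex.Im (f 0)) / h)
    + complex.Im c * ((complex.Re (f h) - complex.Re (f 0)) / h).
  by rewrite !Im_mulc; ring.
by under eq_fun do rewrite E; apply: is_cvgD; apply: is_cvgM => //; exact: is_cvg_cst.
Qed.

Lemma mxtrace_right_differentiable_at0 m (A : 'M[R[i]]_m) (P : R -> 'M[R[i]]_m) :
  mx_right_differentiable_at0 P -> right_differentiable_at0 (fun h => \tr (A *m P h)).
Proof.
move=> dP.
have -> : (fun h => \tr (A *m P h)) = (fun h => \sum_i \sum_j A i j * P h j i).
  by apply/funext => h; apply: eq_bigr => i _; rewrite mxE.
apply: right_differentiable_at0_sum => i; apply: right_differentiable_at0_sum => j.
exact/right_differentiable_at0Ml/dP.
Qed.

Lemma not_right_differentiable_factors_id (eps : R) f g : 0 < eps ->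
  (forall h, 0 < h <= eps -> f h * g h = h%:C) -> f 0 = 0 -> g 0 = 0 ->
  right_differentiable_at0 f -> ~ right_differentiable_at0 g.
Proof.
move=> eps_gt0 fg f0 g0 [fRe fIm] [gRe gIm].
pose q h :=
  (complex.Re (f h) - complex.Re (f 0)) / h * ((complex.Re (g h) - complex.Re (g 0)) / h)
  - (complex.Im (f h) - complex.Im (f 0)) / h * ((complex.Im (g h) - complex.Im (g 0)) / h).
have q_cvg : cvg (q h @[h --> 0^'+]) by apply: is_cvgB; exact: is_cvgM.
have to0 : h * q h @[h --> 0^'+] --> 0 * lim (q h @[h --> 0^'+]).
  by apply: cvgM => //; exact: cvg_at_right_filter cvg_id.
have to1 : h * q h @[h --> 0^'+] --> (1 : R).
  apply: cvg_trans (near_eq_cvg _) (cvg_cst (1 : R)); near=> h.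
  have h_gt0 : 0 < h by near: h; exact: nbhs_right_gt.
  have h_le : h <= eps by near: h; exact: nbhs_right_ltW.
  have fgh : complex.Re (f h) * complex.Re (g h) - complex.Im (f h) * complex.Im (g h) = h.
    by rewrite -Re_mulc fg ?h_gt0 ?h_le.
  suff -> : h * q h = (complex.Re (f h) * complex.Re (g h)
                        - complex.Im (f h) * complex.Im (g h)) / h.
    by rewrite fgh divff // lt0r_neq0.
  by rewrite /q f0 g0 /= !subr0; field; rewrite lt0r_neq0.
have zero_eq1 : 0 * lim (q h @[h --> 0^'+]) = 1 :> R by exact: cvg_unique to0 to1.
by have := @oner_neq0 R; rewrite -zero_eq1 mul0r eqxx.
Unshelve. all: by end_near.
Qed.

End RightDerivative.

Theorem proposition4 (R : realType) (d : nat) (eps : R)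
    (x y : R -> 'cV[R[i]]_d) :
  (2 <= d)%N -> 0 < eps ->
  (forall t, 0 <= t <= eps -> unit_vec (x t) /\ unit_vec (y t)) ->
  vec_continuous_on eps x -> vec_continuous_on eps y ->
  (forall t, 0 <= t <= eps ->
     twirl (ketbra (x t)) (ketbra (y t)) =
       (t / d%:R)%:C *: Uswap R d + ((1 - t) / (d%:R ^+ 2))%:C *: 1%:M) ->
  x 0 = ket0 R d -> y 0 = Fmx R d *m ket0 R d ->
  ~ (mx_right_differentiable_at0 (fun t => ketbra (x t)) /\
     mx_right_differentiable_at0 (fun t => ketbra (y t))).
Proof.
case: d x y => [|[|n]] // x y _ eps_gt0 _ _ _ twirl_xy x0 y0 [dx dy].
pose B := Smx R n.+2 *m Cmx R n.+2.
pose f t := \tr (adj B *m ketbra (x t)).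
pose g t := \tr (B *m ketbra (y t)).
have fg t : 0 < t <= eps -> f t * g t = t%:C.
  case/andP => t_gt0 t_le; rewrite -mxtrace_twirl_SCmx twirl_xy ?t_le ?ltW //.
  by rewrite mxtrace_SCmx_swap_id -(rmorph_nat (real_complex R)) -rmorphM mulfVK // pnatr_eq0.
have f0 : f 0 = 0 by rewrite /f x0 mxtrace_adjSCmx_ket0.
have g0 : g 0 = 0 by rewrite /g y0 mxtrace_SCmx_Fket0.
exact: (not_right_differentiable_factors_id eps_gt0 fg f0 g0
          (mxtrace_right_differentiable_at0 _ dx) (mxtrace_right_differentiable_at0 _ dy)).
Qed.
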